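(* Let $E$ and $F$ be topological vector spaces over a valued field $\mathbb{K}$, $f\colon U\to F$ a continuous map on a subset $U\subseteq E$, $D\subseteq U$ a dense subset, and $\sigma>0$. If $f$ is not $C^{0,\sigma}$, then there exist $x_0\in U$ and a gauge $q$ on $F$ such that, for each neighbourhood $V\subseteq U$ of $x_0$ and each gauge $p$ on $E$, there exist $x,y\in V\cap D$ with $q(f(x)-f(y))>p(x-y)^\sigma$.
   Context: A valued field is a field with an absolute value $|.|$ defining a non-discrete topology; vector spaces are Hausdorff. A gauge on a topological $\mathbb{K}$-vector space $E$ is a map $q\colon E\to[0,\infty[$ with $q(tx)=|t|q(x)$ for $t\in\mathbb{K}$, $x\in E$, such that $\{x: q(x)<r\}$ is a $0$-neighbourhood for each $r>0$. A map $g\colon U\to F$ on $U\subseteq E$ is $C^{0,\sigma}$ if for every $x_0\in U$ and gauge $q$ on $F$ there exist a gauge $p$ on $E$ and a neighbourhood $V\subseteq U$ of $x_0$ with $q(g(y)-g(x))\le p(y-x)^\sigma$ for all $x,y\in V$. *)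

From HB Require Import structures.
From mathcomp Require Import all_boot all_order all_algebra.
From mathcomp Require Import all_classical all_reals topology exp.
Set Implicit Arguments. Unset Strict Implicit. Unset Printing Implicit Defensive.
Import Order.TTheory GRing.Theory Num.Theory.
Local Open Scope classical_set_scope.
Local Open Scope ring_scope.

Definition valued_field (R : realType) (K : fieldType) (abs : K -> R) : Prop :=
  [/\ (forall x, 0 <= abs x),
      (forall x, abs x = 0 <-> x = 0),
      (forall x y, abs (x * y) = abs x * abs y),
      (forall x y, abs (x + y) <= abs x + abs y)
    & (forall e : R, 0 < e -> exists x : K, x != 0 /\ abs x < e)].

HB.structure Definition TopLmod (K : pzRingType) :=
  {M of Topological M & GRing.Lmodule K M}.

(* E is a (Hausdorff) topological vector space over the valued field (K,abs):
   addition E x E -> E is continuous, scalar multiplication K x E -> E is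
   continuous (K carrying the topology induced by abs), and E is Hausdorff. *)
Definition is_tvs (R : realType) (K : fieldType) (abs : K -> R)
    (E : TopLmod.type K) : Prop :=
  [/\ continuous (fun z : E * E => z.1 + z.2),
      (forall (t : K) (x : E) (W : set E), nbhs (t *: x) W ->
         exists e : R, 0 < e /\ exists N : set E, nbhs x N /\
           forall (s : K) (y : E), abs (s - t) < e -> N y -> W (s *: y))
    & hausdorff_space E].

Definition gauge (R : realType) (K : fieldType) (abs : K -> R)
    (E : TopLmod.type K) (q : E -> R) : Prop :=
  [/\ (forall x, 0 <= q x),
      (forall (t : K) (x : E), q (t *: x) = abs t * q x)
    & (forall r : R, 0 < r -> nbhs (0 : E) [set x | q x < r])].

Definition rel_nbhs (T : topologicalType) (U : set T) (x0 : T) (V : set T) : Prop :=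
  V `<=` U /\ exists N : set T, nbhs x0 N /\ N `&` U `<=` V.

Definition dense_in (T : topologicalType) (U D : set T) : Prop :=
  D `<=` U /\ U `<=` closure D.

(* g : U -> F is C^{0,sigma} (g given as a total map, only values on U matter) *)
Definition C0sigma (R : realType) (K : fieldType) (abs : K -> R)
    (E F : TopLmod.type K) (U : set E) (g : E -> F) (sigma : R) : Prop :=
  forall x0 : E, U x0 -> forall q : F -> R, gauge abs q ->
    exists p : E -> R, gauge abs p /\
      exists V : set E, rel_nbhs U x0 V /\
        forall x y : E, V x -> V y -> q (g y - g x) <= powR (p (y - x)) sigma.

(* Let x0 and q0 witness that f is not C^{0,sigma}.  Since q0 need not be
   subadditive, q0 (f x - f y) need not vary continuously with x and y, so the
   bad pairs (x, y) cannot simply be moved into D.  The remedy is the Minkowski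
   functional h of a balanced 0-neighbourhood C with g (C + C) < 1: h is again
   a gauge, and g (u + v) <= max (h u) (h v).  Take for q the functional
   dominating q0 and, given p, test the failure against the functional h
   dominating p.  The strict inequality h (x - y)^sigma < q0 (f x - f y) then
   survives, with p on the left and q on the right, perturbations of x - y and
   f x - f y that are small for h and q, and density of D together with the
   continuity of f provides such perturbations inside D. *)

From HB Require Import structures.
From mathcomp Require Import all_boot all_order all_algebra.
From mathcomp Require Import all_classical all_reals topology exp.
Import Order.TTheory GRing.Theory Num.Theory.
Local Open Scope classical_set_scope.
Local Open Scope ring_scope.
Set Implicit Arguments. Unset Strict Implicit.

Lemma subrBB (G : zmodType) (a b c d : G) :
  a - b - (c - d) = (a - c) - (b - d).
Proof. by rewrite !opprD !opprK addrACA. Qed.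

Lemma powR_invK (R : realType) (x s : R) :
  0 <= x -> s != 0 -> (x `^ s) `^ s^-1 = x.
Proof. by move=> x_ge0 s_neq0; rewrite -powRrM mulfV // powRr1. Qed.

Lemma ltr_powR_inv (R : realType) (x y s : R) : 0 < s -> 0 <= x -> 0 <= y ->
  (x `^ s < y) = (x < y `^ s^-1).
Proof.
move=> s_gt0 x_ge0 y_ge0; have s_neq0 := lt0r_neq0 s_gt0.
have sV_gt0 : 0 < s^-1 by rewrite invr_gt0.
apply/idP/idP => lt_xy.
  rewrite -(powR_invK x_ge0 s_neq0).
  by apply: gt0_ltr_powR; rewrite ?nnegrE ?powR_ge0.
rewrite -[y](powR_invK y_ge0 (invr_neq0 s_neq0)) invrK.
by apply: gt0_ltr_powR; rewrite ?nnegrE ?powR_ge0.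
Qed.

Lemma within_continuous_nbhs (S T : topologicalType) (A : set S) (f : S -> T)
    z W : {within A, continuous f} -> A z -> nbhs (f z) W ->
  nbhs z [set w | A w -> W (f w)].
Proof. by move=> fc Az /fc; rewrite /nbhs /= -nbhs_subspace_in. Qed.

Section ValuedField.
Variables (R : realType) (K : fieldType) (abs : K -> R).
Hypothesis vf : valued_field abs.

Lemma abs_ge0 x : 0 <= abs x. Proof. by case: vf. Qed.

Lemma abs_eq0 x : abs x = 0 <-> x = 0. Proof. by case: vf. Qed.

Lemma abs0 : abs 0 = 0. Proof. exact/abs_eq0. Qed.

Lemma absM x y : abs (x * y) = abs x * abs y. Proof. by case: vf. Qed.

Lemma abs_gt0 x : x != 0 -> 0 < abs x.
Proof.
move=> x0; rewrite lt_neqAle abs_ge0 andbT eq_sym.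
by apply: contra_neq x0 => /abs_eq0.
Qed.

Lemma abs1 : abs 1 = 1.
Proof.
have abs1_gt0 : 0 < abs 1 by rewrite abs_gt0 ?oner_neq0.
by apply: (mulIf (lt0r_neq0 abs1_gt0)); rewrite mul1r -absM mulr1.
Qed.

Lemma absN1 : abs (-1) = 1.
Proof.
have /eqP : abs (-1) ^+ 2 = 1 by rewrite expr2 -absM mulrNN mulr1 abs1.
rewrite sqrf_eq1 => /orP[/eqP //|/eqP absN1_eq].
by have := abs_ge0 (-1); rewrite absN1_eq ler0N1.
Qed.

Lemma absV x : x != 0 -> abs x^-1 = (abs x)^-1.
Proof.
move=> x0; apply: (mulfI (lt0r_neq0 (abs_gt0 x0))).
by rewrite -absM !mulfV ?abs1 // lt0r_neq0 // abs_gt0.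
Qed.

Lemma exists_abs_lt e : 0 < e -> exists x, x != 0 /\ abs x < e.
Proof. by case: vf => _ _ _ _; apply. Qed.

Section TopologicalVectorSpace.
Variable E : TopLmod.type K.
Hypothesis tE : is_tvs abs E.

Lemma nbhs_scale (t : K) (x : E) W :
  nbhs (t *: x) W -> nbhs x [set y | W (t *: y)].
Proof.
case: tE => _ scale_cont _ /scale_cont [e [e_gt0 [N [nN NW]]]].
by apply: filterS nN => y Ny; apply: NW => //; rewrite subrr abs0.
Qed.

Lemma nbhs_add (x y : E) W : nbhs (x + y) W ->
  exists A B, [/\ nbhs x A, nbhs y B & forall a b, A a -> B b -> W (a + b)].
Proof.
case: tE => add_cont _ _ /(add_cont (x, y)) [[A B] /= [nA nB] AB_W].
by exists A, B; split => // a b Aa Bb; apply: (AB_W (a, b)).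
Qed.

Lemma nbhs0_oppr W : nbhs (0 : E) W -> nbhs (0 : E) [set y | W (- y)].
Proof.
move=> nW; have nW' : nbhs ((-1 : K) *: (0 : E)) W by rewrite scaler0.
by apply: filterS (nbhs_scale nW') => y; rewrite /= scaleN1r.
Qed.

Lemma nbhs0_sub W : nbhs (0 : E) W ->
  exists A B, [/\ nbhs 0 A, nbhs 0 B & forall a b, A a -> B b -> W (a - b)].
Proof.
move=> nW; have nW' : nbhs ((0 : E) + 0) W by rewrite addr0.
have [A [B [nA nB AB_W]]] := nbhs_add nW'.
exists A, [set b | B (- b)]; split => //; first exact: nbhs0_oppr.
by move=> a b Aa Bb; apply: AB_W.
Qed.

Lemma nbhs_translate (z : E) W : nbhs 0 W -> nbhs z [set w | W (w - z)].
Proof.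
rewrite -(subrr z) => /nbhs_add [A [B [nA nB AB_W]]].
by apply: filterS nA => w Aw; apply: AB_W => //; apply: nbhs_singleton.
Qed.

Lemma nbhs0_absorbing C (z : E) :
  nbhs 0 C -> exists t, t != 0 /\ C (t^-1 *: z).
Proof.
rewrite -(scale0r z); case: tE => _ scale_cont _ /scale_cont.
move=> [e [e_gt0 [N [nN NC]]]]; have [s [s_neq0 s_lt]] := exists_abs_lt e_gt0.
exists s^-1; rewrite invr_eq0 invrK; split => //.
by apply: NC; [rewrite subr0 | apply: nbhs_singleton].
Qed.

Definition balanced (C : set E) :=
  forall (l : K) z, abs l <= 1 -> C z -> C (l *: z).

Lemma nbhs0_balanced W : nbhs (0 : E) W ->
  exists C, [/\ nbhs 0 C, balanced C & C `<=` W].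
Proof.
move=> nW; have nW' : nbhs ((0 : K) *: (0 : E)) W by rewrite scaler0.
case: tE => _ scale_cont _.
have [e [e_gt0 [N [nN NW]]]] := scale_cont _ _ _ nW'.
exists [set z | exists s y, [/\ abs s < e, N y & z = s *: y]]; split.
- have [s [s_neq0 s_lt]] := exists_abs_lt e_gt0.
  rewrite -[X in nbhs X](scaler0 _ s^-1) in nN.
  apply: filterS (nbhs_scale nN) => y Ny; exists s, (s^-1 *: y).
  by rewrite scalerA mulfV // scale1r.
- move=> l _ l_le1 [s [y [s_lt Ny ->]]]; exists (l * s), y.
  rewrite scalerA absM; split => //; apply: le_lt_trans s_lt.
  by rewrite ler_piMl // abs_ge0.
- by move=> _ [s [y [s_lt Ny ->]]]; apply: NW; rewrite ?subr0.
Qed.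


Lemma gauge_ge0 (g : E -> R) x : gauge abs g -> 0 <= g x.
Proof. by case. Qed.

Lemma gauge_lt_nbhs0 (g : E -> R) r :
  gauge abs g -> 0 < r -> nbhs 0 [set x | g x < r].
Proof. by case=> _ _; apply. Qed.

Lemma gauge_oppr (g : E -> R) x : gauge abs g -> g (- x) = g x.
Proof. by case=> _ g_scale _; rewrite -scaleN1r g_scale absN1 mul1r. Qed.

Definition max_dominates (g h : E -> R) :=
  forall u v, g (u + v) <= Num.max (h u) (h v).

Lemma max_dominates_lt g h u v r :
  max_dominates g h -> h u < r -> h (v - u) < r -> g v < r.
Proof.
move=> gh hu_lt hvu_lt; have := gh u (v - u); rewrite addrC subrK.
by move/le_lt_trans; apply; rewrite gt_max hu_lt.
Qed.

Lemma max_dominates_ge g h u v :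
  max_dominates g h -> gauge abs h -> h (v - u) < g u -> g u <= h v.
Proof.
move=> gh gauge_h hvu_lt; have := gh v (u - v); rewrite addrC subrK.
rewrite -opprB gauge_oppr // le_max => /orP[//|].
by move/(lt_le_trans hvu_lt); rewrite ltxx.
Qed.

Definition minkowski (C : set E) (z : E) : R :=
  inf [set abs t | t in [set t | t != 0 /\ C (t^-1 *: z)]].

Section Minkowski.
Variable C : set E.
Hypothesis nC : nbhs 0 C.

Lemma minkowski_le t z : t != 0 -> C (t^-1 *: z) -> minkowski C z <= abs t.
Proof.
move=> t_neq0 Cz; apply: ge_inf; last by exists t.
by exists 0 => _ [s _ <-]; apply: abs_ge0.
Qed.

Lemma minkowski_nonempty z :
  [set abs t | t in [set t | t != 0 /\ C (t^-1 *: z)]] !=set0.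
Proof. by have [t Ct] := nbhs0_absorbing z nC; exists (abs t), t. Qed.

Lemma minkowski_lt z c : minkowski C z < c ->
  exists t, [/\ t != 0, C (t^-1 *: z) & abs t < c].
Proof.
by case/(inf_lt (minkowski_nonempty z)) => _ [t [t_neq0 Ct] <-]; exists t.
Qed.

Lemma minkowski_ge0 z : 0 <= minkowski C z.
Proof.
by apply: lb_le_inf (minkowski_nonempty z) _ => _ [t _ <-]; apply: abs_ge0.
Qed.

Lemma minkowski0 : minkowski C 0 = 0.
Proof.
apply/eqP; rewrite eq_le minkowski_ge0 andbT leNgt.
apply/negP => /exists_abs_lt [s [s_neq0 s_lt]]; have : minkowski C 0 <= abs s.
  by apply: minkowski_le; rewrite // scaler0; apply: nbhs_singleton.
by rewrite leNgt s_lt.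
Qed.

Lemma minkowski_scale_le t z : t != 0 ->
  minkowski C (t *: z) <= abs t * minkowski C z.
Proof.
move=> t_neq0; rewrite -ler_pdivrMl ?abs_gt0 //.
apply: lb_le_inf (minkowski_nonempty z) _ => _ [s [s_neq0 Cs] <-].
rewrite ler_pdivrMl ?abs_gt0 // -absM.
apply: minkowski_le; first exact: mulf_neq0.
by rewrite scalerA invfM mulrAC mulVf // mul1r.
Qed.

Lemma minkowski_gauge : gauge abs (minkowski C).
Proof.
split; first exact: minkowski_ge0.
- move=> t z; have [->|t_neq0] := eqVneq t 0.
    by rewrite scale0r abs0 mul0r minkowski0.
  apply/eqP; rewrite eq_le minkowski_scale_le //=.
  have := minkowski_scale_le (t *: z) (invr_neq0 t_neq0).
  by rewrite scalerK // absV // ler_pdivlMl // abs_gt0.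
- move=> r /exists_abs_lt [s [s_neq0 s_lt]].
  have nC' : nbhs (s^-1 *: (0 : E)) C by rewrite scaler0.
  apply: filterS (nbhs_scale nC') => z /= Cz.
  exact: le_lt_trans (minkowski_le s_neq0 Cz) s_lt.
Qed.

End Minkowski.

Section QuasiTriangle.
Variables (g : E -> R) (C : set E).
Hypotheses (gg : gauge abs g) (nC : nbhs 0 C) (bC : balanced C).
Hypothesis CC_lt1 : forall a b, C a -> C b -> g (a + b) < 1.

Lemma gauge_lt_max_abs t s u v : t != 0 -> s != 0 ->
  C (t^-1 *: u) -> C (s^-1 *: v) -> g (u + v) < Num.max (abs t) (abs s).
Proof.
wlog st : t s u v / abs s <= abs t.
  move=> wlog_st; case/orP: (le_total (abs s) (abs t)) => [st|ts].
    exact: wlog_st st.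
  move=> t_neq0 s_neq0 Cu Cv; rewrite addrC maxC.
  exact: wlog_st ts s_neq0 t_neq0 Cv Cu.
move=> t_neq0 s_neq0 Cu Cv; rewrite (max_idPl st).
have Cv' : C (t^-1 *: v).
  rewrite -[v](scalerKV s_neq0) scalerA; apply: bC => //.
  by rewrite absM absV // ler_pdivrMl ?abs_gt0 // mulr1.
case: gg => _ g_scale _.
rewrite -[u + v](scalerKV t_neq0) scalerDr g_scale -[ltRHS]mulr1.
by rewrite ltr_pM2l ?abs_gt0 // CC_lt1.
Qed.

Lemma minkowski_max_dominates : max_dominates g (minkowski C).
Proof.
move=> u v; rewrite leNgt gt_max; apply/negP => /andP[].
move=> /(minkowski_lt nC) [t [t_neq0 Cu t_lt]].
move=> /(minkowski_lt nC) [s [s_neq0 Cv s_lt]].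
have := gauge_lt_max_abs t_neq0 s_neq0 Cu Cv.
by rewrite ltNge ge_max !ltW.
Qed.

End QuasiTriangle.

Lemma exists_max_dominating (g : E -> R) : gauge abs g ->
  exists h, gauge abs h /\ max_dominates g h.
Proof.
move=> gg; have nW : nbhs ((0 : E) + 0) [set x | g x < 1].
  by rewrite addr0; apply: gauge_lt_nbhs0.
have [A [B [nA nB AB_lt1]]] := nbhs_add nW.
have [C [nC bC CAB]] := nbhs0_balanced (filterI nA nB).
exists (minkowski C); split; first exact: minkowski_gauge.
apply: minkowski_max_dominates => // a b Ca Cb.
by apply: AB_lt1; [apply: (CAB _ Ca).1 | apply: (CAB _ Cb).2].
Qed.

End TopologicalVectorSpace.

Section DenseApproximation.
Variables (E F : TopLmod.type K) (U D : set E) (f : E -> F).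
Hypotheses (tE : is_tvs abs E) (tF : is_tvs abs F).
Hypotheses (fc : {within U, continuous f}) (dD : dense_in U D).

Lemma dense_approx x N WE WF : U x -> nbhs x N -> nbhs 0 WE -> nbhs 0 WF ->
  exists x', [/\ (N `&` D) x', WE (x' - x) & WF (f x' - f x)].
Proof.
move=> Ux nN nWE nWF.
have nM : nbhs x
    (N `&` [set w | WE (w - x)] `&` [set w | U w -> WF (f w - f x)]).
  apply: filterI; first by apply: filterI => //; apply: nbhs_translate.
  exact: within_continuous_nbhs fc Ux (nbhs_translate tF _ nWF).
have [x' [Dx' [[Nx' WEx'] WFx']]] := dD.2 x Ux _ nM.
by exists x'; split => //; apply: WFx'; apply: dD.1.
Qed.

Lemma dense_approx_sub x y N WE WF : U x -> U y -> nbhs x N -> nbhs y N ->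
  nbhs 0 WE -> nbhs 0 WF -> exists x' y', [/\ (N `&` D) x', (N `&` D) y',
    WE (x' - y' - (x - y)) & WF (f x' - f y' - (f x - f y))].
Proof.
move=> Ux Uy nNx nNy /(nbhs0_sub tE) [A [B [nA nB ABE]]].
move=> /(nbhs0_sub tF) [A' [B' [nA' nB' ABF]]].
have [x' [NDx' Ax' A'x']] := dense_approx Ux nNx nA nA'.
have [y' [NDy' By' B'y']] := dense_approx Uy nNy nB nB'.
by exists x', y'; split => //; rewrite subrBB; [apply: ABE | apply: ABF].
Qed.

End DenseApproximation.

End ValuedField.

Lemma not_C0sigma_witness (R : realType) (K : fieldType) (abs : K -> R)
    (E F : TopLmod.type K) (U : set E) (f : E -> F) (sigma : R) :
  ~ C0sigma abs U f sigma ->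
  exists x0, U x0 /\ exists q : F -> R, gauge abs q /\
    forall p : E -> R, gauge abs p -> forall V, rel_nbhs U x0 V ->
      exists x y, [/\ V x, V y & powR (p (x - y)) sigma < q (f x - f y)].
Proof.
move=> nC0; apply: contrapT => nW; apply: nC0 => x0 Ux0 q gq.
apply: contrapT => np; apply: nW; exists x0; split => //; exists q; split => //.
move=> p gp V rV; apply: contrapT => nxy; apply: np; exists p; split => //.
exists V; split => // x y Vx Vy; rewrite leNgt; apply/negP => lt.
by apply: nxy; exists y, x.
Qed.

Unset Implicit Arguments. Set Strict Implicit.
Theorem lemma1p28 (R : realType) (K : fieldType) (abs : K -> R)
    (E F : TopLmod.type K) (U D : set E) (f : E -> F) (sigma : R) :
  valued_field abs -> is_tvs abs E -> is_tvs abs F ->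
  {within U, continuous f} -> dense_in U D -> 0 < sigma ->
  ~ C0sigma abs U f sigma ->
  exists x0 : E, U x0 /\ exists q : F -> R, gauge abs q /\
    forall V : set E, rel_nbhs U x0 V ->
    forall p : E -> R, gauge abs p ->
      exists x y : E, (V `&` D) x /\ (V `&` D) y /\
        powR (p (x - y)) sigma < q (f x - f y).
Proof.
move=> vf tE tF fc dD sigma_gt0.
move=> /not_C0sigma_witness [x0 [Ux0 [q0 [gq0 q0_wit]]]].
have [q [gq q0_le]] := exists_max_dominating vf tF gq0.
exists x0; split => //; exists q; split => // V [_ [N [nN NUV]]] p gp.
have [p1 [gp1 p_le]] := exists_max_dominating vf tE gp.
have rV : rel_nbhs U x0 (N° `&` U).
  by split=> [z []//|]; exists N°; split=> //; apply: nbhs_interior.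
have [x [y [[Nx Ux] [Ny Uy] p1_lt]]] := q0_wit p1 gp1 _ rV.
have q0_gt0 : 0 < q0 (f x - f y) := le_lt_trans (powR_ge0 _ _) p1_lt.
rewrite ltr_powR_inv ?(gauge_ge0 _ gp1) ?(gauge_ge0 _ gq0) // in p1_lt.
have [x' [y' [NDx' NDy' p1_near q_near]]] :=
  dense_approx_sub vf tE tF fc dD Ux Uy (nbhs_interior Nx) (nbhs_interior Ny)
    (gauge_lt_nbhs0 gp1 (powR_gt0 sigma^-1 q0_gt0)) (gauge_lt_nbhs0 gq q0_gt0).
have VD z : (N° `&` D) z -> (V `&` D) z.
  move=> [Nz Dz]; split => //.
  by apply: NUV; split; [apply: interior_subset | apply: dD.1].
exists x', y'; split; [exact: VD | split; [exact: VD |]].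
apply: (lt_le_trans _ (max_dominates_ge vf q0_le gq q_near)).
rewrite ltr_powR_inv ?(gauge_ge0 _ gp) ?(gauge_ge0 _ gq0) //.
exact: max_dominates_lt p_le p1_lt p1_near.
Qed.
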